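(* Let $R$ be a P$v$MD, $x$ a nonzero element of $R$, $P$ a prime ideal minimal over $xR$, and $I=xR_P\cap R$. Then (1) $I$ is a $w$-ideal of $R$ (i.e. $I_w=I$); (2) $xR+I^2$ is a $w$-reduction of $I$; (3) if $I$ is $w$-basic, then $P$ is a maximal $t$-ideal of $R$.
   Context: For a domain $R$ with quotient field $K$ and nonzero fractional ideal $I$: $I^{-1}=(R:I)=\{x\in K:xI\subseteq R\}$, $I_v=(I^{-1})^{-1}$, $I_t=\bigcup J_v$ over finitely generated subideals $J\subseteq I$; a maximal $t$-ideal is an ideal maximal among proper integral ideals $Q$ with $Q_t=Q$. The $w$-operation is $I_w=\bigcup(I:J)$ over finitely generated ideals $J$ with $J_v=R$ (equivalently $I_w=\bigcap_M IR_M$ over maximal $t$-ideals $M$). $R$ is a P$v$MD if every nonzero finitely generated ideal $I$ satisfies $(II^{-1})_t=R$ (equivalently $R_M$ is a valuation domain for each maximal $t$-ideal $M$). For a nonzero ideal $I$, an ideal $J\subseteq I$ is a $w$-reduction of $I$ if $(JI^n)_w=(I^{n+1})_w$ for some integer $n\ge0$; $I$ is $w$-basic if every $w$-reduction $J$ of $I$ satisfies $J_w=I_w$. *)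

(* A domain R with quotient field K is modelled as a field
   K together with a subring S : K -> Prop such that every element of K is a
   quotient of elements of S. *)
From HB Require Import structures.
From mathcomp Require Import all_boot all_order all_algebra.
Set Implicit Arguments. Unset Strict Implicit. Unset Printing Implicit Defensive.
Import GRing.Theory.
Local Open Scope ring_scope.

Section IdealDefs.
Variable K : fieldType.
Implicit Types (S I J A B P Q : K -> Prop) (x y : K).

Definition seteq A B : Prop := forall y, A y <-> B y.
Definition subset A B : Prop := forall y, A y -> B y.

Definition is_domain_with_qf S : Prop :=
  [/\ S 0, S 1, (forall a b, S a -> S b -> S (a - b)),
      (forall a b, S a -> S b -> S (a * b)) &
      (forall k : K, exists a b, [/\ S a, S b, b != 0 & k = a / b])].

Definition is_submod S I : Prop :=
  [/\ I 0, (forall a b, I a -> I b -> I (a + b)) &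
      (forall r a, S r -> I a -> I (r * a))].

Definition is_ideal S I : Prop := is_submod S I /\ subset I S.

Definition is_nz_frac_ideal S I : Prop :=
  [/\ is_submod S I, (exists y, I y /\ y != 0) &
      (exists d, [/\ S d, d != 0 & forall y, I y -> S (d * y)])].

Definition colon A B : K -> Prop := fun x => forall b, B b -> A (x * b).

Definition inv S I := colon S I.
Definition vop S I := colon S (colon S I).

Definition span S (g : seq K) : K -> Prop :=
  fun y => exists f : nat -> K, (forall i, S (f i)) /\
                                y = \sum_(i < size g) f i * g`_i.

Definition all_in (g : seq K) (I : K -> Prop) : Prop :=
  forall i, (i < size g)%N -> I g`_i.

Definition top S I : K -> Prop :=
  fun y => exists g : seq K, all_in g I /\ vop S (span S g) y.

Definition wop S I : K -> Prop :=
  fun y => exists g : seq K, all_in g S /\ seteq (vop S (span S g)) S /\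
                            colon I (span S g) y.

Definition iprod A B : K -> Prop :=
  fun y => exists (n : nat) (a b : nat -> K),
      (forall i, (i < n)%N -> A (a i) /\ B (b i)) /\
      y = \sum_(i < n) a i * b i.

Definition isum A B : K -> Prop := fun y => exists a b, [/\ A a, B b & y = a + b].

Fixpoint ipow S I (n : nat) : K -> Prop :=
  match n with 0%N => S | n'.+1 => iprod (ipow S I n') I end.

Definition principal S x : K -> Prop := fun y => exists r, S r /\ y = x * r.

Definition is_prime S P : Prop :=
  [/\ is_ideal S P, ~ P 1 &
      forall a b, S a -> S b -> P (a * b) -> P a \/ P b].

Definition minimal_prime_over S P x : Prop :=
  [/\ is_prime S P, P x &
      forall Q, is_prime S Q -> Q x -> subset Q P -> seteq Q P].

Definition localize S P : K -> Prop :=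
  fun y => exists a s, [/\ S a, S s, ~ P s & y = a / s].

Definition is_t_ideal S Q : Prop := is_ideal S Q /\ seteq (top S Q) Q.

Definition is_max_t_ideal S Q : Prop :=
  [/\ is_t_ideal S Q, ~ Q 1 &
      forall Q', is_t_ideal S Q' -> ~ Q' 1 -> subset Q Q' -> seteq Q' Q].

Definition PvMD S : Prop :=
  forall g : seq K, all_in g S -> (exists y, span S g y /\ y != 0) ->
    seteq (top S (iprod (span S g) (inv S (span S g)))) S.

Definition w_reduction S J I : Prop :=
  is_ideal S J /\ subset J I /\
  exists n : nat, seteq (wop S (iprod J (ipow S I n))) (wop S (ipow S I n.+1)).

Definition w_basic S I : Prop :=
  forall J, w_reduction S J I -> seteq (wop S J) (wop S I).

End IdealDefs.

(* Over a P$v$MD each [R_M], [M] a maximal $t$-ideal, is a valuation domain,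
   and the $w$-closure of a submodule [A] is the intersection of the [A R_M];
   so all three claims can be checked locally.  By minimality [P] is the
   radical of [I R_P], hence a $t$-ideal; a generator outside [P] of any [J]
   with [J_v = R] then serves as an extra denominator, which gives (1).  For
   (2), if [M ⊇ I] the valuation property puts [x/s] in [R_M] for every
   [s ∉ P], so [uv/x ∈ R_M] for [u, v ∈ I], i.e. [I^2 ⊆ x I R_M].  For (3), an
   element of a proper $t$-ideal above [P] but outside [P] would, through
   [I = J_w], produce a fraction lying both in and out of [R_M]. *)

From Pilot Require Import Defs.
From HB Require Import structures.
From mathcomp Require Import all_boot all_order all_algebra.
From mathcomp Require Import ring.
From mathcomp Require classical_sets boolp.
From Stdlib Require Import Classical.
Set Implicit Arguments. Unset Strict Implicit.
Import GRing.Theory.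
Local Open Scope ring_scope.

Definition chain_union {T : Type} (F : (T -> Prop) -> Prop) : T -> Prop :=
  fun t => exists X, F X /\ X t.

Definition is_chain {T : Type} (F : (T -> Prop) -> Prop) : Prop :=
  forall X Y, F X -> F Y -> (forall t, X t -> Y t) \/ (forall t, Y t -> X t).

Section ZornAbove.
Import classical_sets boolp.
Local Open Scope classical_set_scope.

(* [Zorn_bigcup] applies to the family of [X] with [Fam (A0 `|` X)], which
   also contains the union of the empty chain. *)
Lemma Zorn_above (T : Type) (Fam : set (set T)) (A0 : set T) :
  Fam A0 ->
  (forall F, (forall X, F X -> Fam X) -> (exists X, F X) -> is_chain F ->
     Fam (chain_union F)) ->
  exists M, [/\ Fam M, A0 `<=` M & forall B, Fam B -> M `<=` B -> B `<=` M].
Proof.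
move=> FamA0 Fam_chain.
have [A [FamA maxA]] : exists A, Fam (A0 `|` A) /\ forall B, A `<` B -> ~ Fam (A0 `|` B).
  apply: (@Zorn_bigcup T (fun X => Fam (A0 `|` X))) => F FFam Ftot.
  have [[X FX]|F0] := pselect (exists X, F X); last first.
    suff -> : bigcup F id = set0 by rewrite setU0.
    by apply/seteqP; split => // t [X FX _]; case: F0; exists X.
  pose G (Y : set T) := exists2 X, F X & Y = A0 `|` X.
  suff -> : A0 `|` bigcup F id = chain_union G.
    apply: Fam_chain; first by move=> Y [Z /FFam FZ ->].
      by exists (A0 `|` X), X.
    move=> _ _ [X1 FX1 ->] [X2 FX2 ->].
    by case: (Ftot X1 X2 FX1 FX2) => sub; [left | right]; apply: setUS.
  apply/seteqP; split => t.
    case=> [A0t|[Y FY Yt]]; first by exists (A0 `|` X); split; [exists X | left].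
    by exists (A0 `|` Y); split; [exists Y | right].
  by case=> _ [[Y FY ->] [A0t|Yt]]; [left | right; exists Y].
exists (A0 `|` A); split; [exact: FamA | by move=> t; left |].
move=> B FamB AB t Bt; right; apply: NNPP => nAt; apply: (maxA B).
  by split; [move=> u Au; apply: AB; right | move=> BA; exact: nAt (BA t Bt)].
by rewrite (setUidPr _ _).2 // => u A0u; apply: AB; left.
Qed.

End ZornAbove.

Section Domain.
Variables (K : fieldType) (S : K -> Prop).
Hypothesis HS : is_domain_with_qf S.
Implicit Types (a b r s t y z : K) (g : seq K) (A B C Q M : K -> Prop).

Lemma S0 : S 0. Proof. by case: HS. Qed.
Lemma S1 : S 1. Proof. by case: HS. Qed.
Lemma SB a b : S a -> S b -> S (a - b). Proof. by case: HS => _ _ SB _ _; apply: SB. Qed.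
Lemma SM a b : S a -> S b -> S (a * b). Proof. by case: HS => _ _ _ SM _; apply: SM. Qed.
Lemma SN a : S a -> S (- a). Proof. by move=> Sa; rewrite -sub0r; apply: SB S0 Sa. Qed.
Lemma SD a b : S a -> S b -> S (a + b).
Proof. by move=> Sa Sb; rewrite -[b]opprK; apply/SB/SN. Qed.
Lemma SX a n : S a -> S (a ^+ n).
Proof. by move=> Sa; elim: n => [|n IH]; rewrite ?expr0 ?exprS; [exact: S1 | exact: SM]. Qed.

Lemma submod0 {A} : is_submod S A -> A 0. Proof. by case. Qed.
Lemma submodD {A a b} : is_submod S A -> A a -> A b -> A (a + b).
Proof. by case=> _ hD _; apply: hD. Qed.
Lemma submodZ {A r a} : is_submod S A -> S r -> A a -> A (r * a).
Proof. by case=> _ _ hZ; apply: hZ. Qed.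
Lemma submodZr {A r a} : is_submod S A -> S r -> A a -> A (a * r).
Proof. by rewrite mulrC; apply: submodZ. Qed.
Lemma submod_sum {A n} (f : 'I_n -> K) : is_submod S A -> (forall i, A (f i)) -> A (\sum_i f i).
Proof. by move=> hA Af; elim/big_ind: _ => //; [exact: submod0 | move=> a b; exact: submodD]. Qed.

Lemma submodS : is_submod S S. Proof. by split; [exact: S0 | exact: SD | exact: SM]. Qed.

Lemma ideal_submod {Q} : is_ideal S Q -> is_submod S Q. Proof. by case. Qed.
Lemma ideal_sub {Q y} : is_ideal S Q -> Q y -> S y. Proof. by case=> _; apply. Qed.

Lemma chain_union_ideal F : (forall X, F X -> is_ideal S X) -> (exists X, F X) ->
  is_chain F -> is_ideal S (chain_union F).
Proof.
move=> Fid [X0 FX0] Fch; split; last by move=> y [X [/Fid idX Xy]]; apply: ideal_sub Xy.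
split; first by exists X0; split => //; exact: submod0 (ideal_submod (Fid X0 FX0)).
- move=> y z [X [FX Xy]] [Y [FY Yz]].
  have [XY|YX] := Fch X Y FX FY; [exists Y | exists X]; split => //.
  + by apply: submodD (ideal_submod (Fid Y FY)) (XY y Xy) Yz.
  + by apply: submodD (ideal_submod (Fid X FX)) Xy (YX z Yz).
- by move=> r y Sr [X [FX Xy]]; exists X; split => //; apply: submodZ (ideal_submod (Fid X FX)) Sr Xy.
Qed.

Lemma all_in_cons a g A : all_in (a :: g) A <-> A a /\ all_in g A.
Proof.
split; first by move=> h; split; [exact: (h 0%N) | move=> i; exact: (h i.+1)].
by case=> Aa hg [|i] //=; apply: hg.
Qed.

Lemma all_in_cat g1 g2 A : all_in g1 A -> all_in g2 A -> all_in (g1 ++ g2) A.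
Proof.
elim: g1 => [|a g1 IH] //= /all_in_cons [Aa h1] h2.
by apply/all_in_cons; split => //; apply: IH.
Qed.

Lemma all_in_mono g A B : (forall y, A y -> B y) -> all_in g A -> all_in g B.
Proof. by move=> AB h i hi; apply/AB/h. Qed.

Lemma all_in_map (f : K -> K) g A B : (forall y, A y -> B (f y)) ->
  all_in g A -> all_in (map f g) B.
Proof.
move=> hf; elim: g => [|a g IH] //= /all_in_cons [Aa hg].
by apply/all_in_cons; split; [apply: hf | apply: IH].
Qed.

Lemma all_in_chain_union F g : (exists X, F X) -> is_chain F ->
  all_in g (chain_union F) -> exists X, F X /\ all_in g X.
Proof.
move=> [X0 FX0] Fch; elim: g => [|a g IH]; first by exists X0.
move=> /all_in_cons [[X [FX Xa]] /IH [Y [FY hY]]].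
have [XY|YX] := Fch X Y FX FY.
  by exists Y; split => //; apply/all_in_cons; split => //; apply: XY.
by exists X; split => //; apply/all_in_cons; split => //; apply: all_in_mono hY.
Qed.

Lemma span_nil y : Defs.span S [::] y <-> y = 0.
Proof.
split; first by case=> f [_ ->]; rewrite big_ord0.
by move=> ->; exists (fun _ => 0); split => [i|]; [exact: S0 | rewrite big_ord0].
Qed.

Lemma span_cons a g y :
  Defs.span S (a :: g) y <-> exists r z, [/\ S r, Defs.span S g z & y = r * a + z].
Proof.
split.
  case=> f [Sf ->]; rewrite /= big_ord_recl /=.
  exists (f 0%N), (\sum_(i < size g) f (bump 0 i) * (a :: g)`_(bump 0 i)); split => //.
  by exists (fun i => f i.+1); split => //; apply: eq_bigr.
case=> r [z [Sr [f [Sf ->]] ->]].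
exists (fun i => if i is j.+1 then f j else r); split; first by case.
by rewrite /= big_ord_recl /=; congr (_ + _); apply: eq_bigr.
Qed.

Lemma span_submod g : is_submod S (Defs.span S g).
Proof.
elim: g => [|a g IH].
  split; first by apply/span_nil.
    by move=> y z /span_nil -> /span_nil ->; apply/span_nil; rewrite addr0.
  by move=> r y _ /span_nil ->; apply/span_nil; rewrite mulr0.
split.
- apply/span_cons; exists 0, 0; split; [exact: S0 | exact: submod0 | by rewrite mul0r addr0].
- move=> y1 y2 /span_cons [r1 [z1 [Sr1 z1g ->]]] /span_cons [r2 [z2 [Sr2 z2g ->]]].
  apply/span_cons; exists (r1 + r2), (z1 + z2); split; [exact: SD | exact: submodD | ].
  by rewrite mulrDl addrACA.
- move=> r y Sr /span_cons [r1 [z1 [Sr1 z1g ->]]].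
  apply/span_cons; exists (r * r1), (r * z1); split; [exact: SM | exact: submodZ | ].
  by rewrite mulrDr mulrA.
Qed.

Lemma span_min g A : is_submod S A -> all_in g A -> forall y, Defs.span S g y -> A y.
Proof.
move=> hA; elim: g => [|a g IH]; first by move=> _ y /span_nil ->; exact: submod0.
move=> /all_in_cons [Aa hg] y /span_cons [r [z [Sr zg ->]]].
by apply: submodD => //; [exact: submodZ | exact: IH].
Qed.

Lemma span_subS g : all_in g S -> forall y, Defs.span S g y -> S y.
Proof. exact: span_min submodS. Qed.

Lemma span_head a g : Defs.span S (a :: g) a.
Proof.
apply/span_cons; exists 1, 0.
by split; [exact: S1 | exact: submod0 (span_submod g) | rewrite mul1r addr0].
Qed.

Lemma span_tail a g y : Defs.span S g y -> Defs.span S (a :: g) y.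
Proof. by move=> h; apply/span_cons; exists 0, y; split; [exact: S0 | | rewrite mul0r add0r]. Qed.

Lemma span_nth g i : (i < size g)%N -> Defs.span S g g`_i.
Proof.
elim: g i => [|a g IH] [|i] //= hi; first exact: span_head.
by apply/span_tail/IH.
Qed.

Lemma span_catl g1 g2 y : Defs.span S g1 y -> Defs.span S (g1 ++ g2) y.
Proof.
apply: span_min (span_submod _) _ _ => i hi.
have := @span_nth (g1 ++ g2) i; rewrite nth_cat hi size_cat; apply; exact: ltn_addr.
Qed.

Lemma span_catr g1 g2 y : Defs.span S g2 y -> Defs.span S (g1 ++ g2) y.
Proof. by elim: g1 => [|a g1 IH] //= h; apply/span_tail/IH. Qed.

Lemma span_map_mul c g y :
  Defs.span S g y -> Defs.span S (map (fun a => c * a) g) (c * y).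
Proof.
elim: g y => [|a g IH] y /=; first by move/span_nil ->; apply/span_nil; rewrite mulr0.
move/span_cons => [r [z [Sr zg ->]]]; apply/span_cons; exists r, (c * z).
by split => //; [exact: IH | rewrite mulrDr mulrCA].
Qed.

Lemma colon_anti A B C y : (forall a, A a -> B a) -> colon C B y -> colon C A y.
Proof. by move=> AB h b Ab; apply/h/AB. Qed.

Lemma vop_mono A B y : (forall a, A a -> B a) -> vop S A y -> vop S B y.
Proof. by move=> AB h b hb; apply: h; apply: colon_anti hb. Qed.

Lemma vop_ext A y : A y -> vop S A y.
Proof. by move=> Ay b hb; rewrite mulrC; apply: hb. Qed.

Lemma vop_idem A y : vop S (vop S A) y -> vop S A y.
Proof. by move=> h b hb; apply: h => c hc; rewrite mulrC; exact: hc. Qed.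

Lemma vop_submod A : is_submod S (vop S A).
Proof.
split.
- by move=> b _; rewrite mul0r; exact: S0.
- by move=> y z hy hz b hb; rewrite mulrDl; apply: SD; [apply: hy | apply: hz].
- by move=> r y Sr hy b hb; rewrite -mulrA; apply: SM => //; apply: hy.
Qed.

Lemma vop_mul A B C y z : (forall a b, A a -> B b -> C (a * b)) ->
  vop S A y -> vop S B z -> vop S C (y * z).
Proof.
move=> hC hy hz w hw.
have hyw : colon S B (y * w).
  move=> b Bb; rewrite -mulrA; apply: hy => a Aa.
  by rewrite -mulrA [b * a]mulrC; apply/hw/hC.
by rewrite [y * z]mulrC -mulrA; apply: hz.
Qed.

Lemma vop_scale A B c y : (forall a, A a -> B (c * a)) -> vop S A y -> vop S B (c * y).
Proof.
move=> hB hy w hw; rewrite [c * y]mulrC -mulrA; apply: hy => a Aa.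
by rewrite [c * w]mulrC -mulrA; apply/hw/hB.
Qed.

Lemma vop_principal x y : x != 0 -> vop S (principal S x) y -> principal S x y.
Proof.
move=> x0 hy; exists (y * x^-1); split; last by rewrite mulrC -mulrA mulVf ?mulr1.
by apply: hy => b [r [Sr ->]]; rewrite mulrA mulVf // mul1r.
Qed.

Lemma vop_subS A y : (forall a, A a -> S a) -> vop S A y -> S y.
Proof. by move=> AS hy; rewrite -[y]mulr1; apply: hy => b Ab; rewrite mul1r; apply: AS. Qed.

Lemma vop_span1 y : vop S (Defs.span S [:: 1]) y <-> S y.
Proof.
split; first by apply/vop_subS/span_subS; apply/all_in_cons; split => //; exact: S1.
move=> Sy; rewrite -[y]mulr1; apply: (submodZ (vop_submod _)) Sy _.
exact/vop_ext/span_head.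
Qed.

Lemma top_ext A y : A y -> top S A y.
Proof. by move=> Ay; exists [:: y]; split; [apply/all_in_cons | apply/vop_ext/span_head]. Qed.

Lemma top_subS A y : (forall a, A a -> S a) -> top S A y -> S y.
Proof. by move=> AS [g [hg hy]]; apply: vop_subS hy; apply: span_subS; exact: all_in_mono hg. Qed.

Lemma top_submod A : is_submod S (top S A).
Proof.
split.
- by exists [::]; split => //; exact: submod0 (vop_submod _).
- move=> y z [g1 [h1 hy]] [g2 [h2 hz]]; exists (g1 ++ g2); split; first exact: all_in_cat.
  apply: submodD (vop_submod _) _ _.
  + by apply: vop_mono hy => a; apply: span_catl.
  + by apply: vop_mono hz => a; apply: span_catr.
- by move=> r y Sr [g [hg hy]]; exists g; split => //; exact: submodZ (vop_submod _) Sr hy.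
Qed.

(* Each generator of a finitely generated submodule of [A_t] lies in some
   [(span h)_v] with [h] in [A]; concatenating these [h] gives one list for all. *)
Lemma top_span A g : all_in g (top S A) ->
  exists h, all_in h A /\ forall y, Defs.span S g y -> vop S (Defs.span S h) y.
Proof.
elim: g => [|a g IH].
  by move=> _; exists [::]; split => // y /span_nil ->; exact: submod0 (vop_submod _).
move=> /all_in_cons [[h1 [hh1 ha]] /IH [h2 [hh2 hs]]].
exists (h1 ++ h2); split; first exact: all_in_cat.
move=> y /span_cons [r [z [Sr zg ->]]]; apply: submodD (vop_submod _) _ _.
  by apply: submodZ (vop_submod _) Sr _; apply: vop_mono ha => b; apply: span_catl.
by apply: vop_mono (hs _ zg) => b; apply: span_catr.
Qed.

Lemma top_idem A y : top S (top S A) y -> top S A y.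
Proof.
move=> [g [hg hy]]; have [h [hh hs]] := top_span hg.
by exists h; split => //; apply: vop_idem; exact: vop_mono hy.
Qed.

Lemma top_t_ideal A : is_ideal S A -> is_t_ideal S (top S A).
Proof.
move=> [_ AS]; split; first by split; [exact: top_submod | move=> y; apply: top_subS].
by move=> y; split; [exact: top_idem | exact: top_ext].
Qed.

Lemma t_ideal_vop Q g y : is_t_ideal S Q -> all_in g Q -> vop S (Defs.span S g) y -> Q y.
Proof. by move=> [_ hQ] hg hy; apply/hQ; exists g. Qed.

Lemma iprod_1 A B a b : A a -> B b -> iprod A B (a * b).
Proof. by move=> Aa Bb; exists 1%N, (fun _ => a), (fun _ => b); rewrite big_ord1. Qed.

Lemma iprod_min A B C y : is_submod S C -> (forall a b, A a -> B b -> C (a * b)) ->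
  iprod A B y -> C y.
Proof.
move=> hC hAB [n [a [b [hab ->]]]]; apply: submod_sum hC _ => i.
by have [Aa Bb] := hab i (ltn_ord i); apply: hAB.
Qed.

Lemma iprod_submod A B : is_submod S B -> is_submod S (iprod A B).
Proof.
move=> hB; split.
- by exists 0%N, (fun _ => 0), (fun _ => 0); rewrite big_ord0.
- move=> y z [n1 [a1 [b1 [h1 ->]]]] [n2 [a2 [b2 [h2 ->]]]].
  exists (n1 + n2)%N, (fun i => if (i < n1)%N then a1 i else a2 (i - n1)%N),
         (fun i => if (i < n1)%N then b1 i else b2 (i - n1)%N); split.
    move=> i hi; case: ifP => hin; first exact: h1.
    by apply: h2; rewrite ltn_subLR // leqNgt hin.
  rewrite big_split_ord /=; congr (_ + _); apply: eq_bigr => i _ /=.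
    by rewrite ltn_ord.
  by rewrite ltnNge leq_addr /= addKn.
- move=> r y Sr [n [a [b [h ->]]]]; exists n, a, (fun i => r * b i); split.
    by move=> i hi; have [Aa Bb] := h i hi; split => //; apply: submodZ.
  by rewrite mulr_sumr; apply: eq_bigr => i _; rewrite mulrCA.
Qed.

Lemma isum_submod A B : is_submod S A -> is_submod S B -> is_submod S (isum A B).
Proof.
move=> hA hB; split.
- by exists 0, 0; split; [exact: submod0 | exact: submod0 | rewrite addr0].
- move=> y z [a1 [b1 [A1 B1 ->]]] [a2 [b2 [A2 B2 ->]]].
  by exists (a1 + a2), (b1 + b2); split; [exact: submodD | exact: submodD | rewrite addrACA].
- move=> r y Sr [a [b [Aa Bb ->]]].
  by exists (r * a), (r * b); split; [exact: submodZ | exact: submodZ | rewrite mulrDr].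
Qed.

Lemma principal_submod x : is_submod S (principal S x).
Proof.
split.
- by exists 0; split; [exact: S0 | rewrite mulr0].
- by move=> y z [r [Sr ->]] [t [St ->]]; exists (r + t); split; [exact: SD | rewrite mulrDr].
- by move=> r' y Sr' [r [Sr ->]]; exists (r' * r); split; [exact: SM | rewrite mulrCA].
Qed.

Lemma principal_subS x y : S x -> principal S x y -> S y.
Proof. by move=> Sx [r [Sr ->]]; apply: SM. Qed.

Definition compl_mulr_closed Q := forall a b, S a -> S b -> ~ Q a -> ~ Q b -> ~ Q (a * b).

Lemma compl_neq0 {Q s} : Q 0 -> ~ Q s -> s != 0.
Proof. by move=> Q0; apply: contra_not_neq => ->. Qed.

Lemma localize_S {Q a} : ~ Q 1 -> S a -> localize S Q a.
Proof. by move=> Q1 Sa; exists a, 1; split => //; [exact: S1 | rewrite invr1 mulr1]. Qed.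

Lemma localize_submod {Q} : Q 0 -> ~ Q 1 -> compl_mulr_closed Q -> is_submod S (localize S Q).
Proof.
move=> Q0 Q1 QM; split.
- exact: localize_S Q1 S0.
- move=> y z [a [s [Sa Ss Qs ->]]] [b [t [Sb St Qt ->]]].
  exists (a * t + b * s), (s * t); split; [by apply: SD; apply: SM | exact: SM | exact: QM |].
  by field; rewrite !(compl_neq0 Q0).
- move=> r y Sr [a [s [Sa Ss Qs ->]]].
  by exists (r * a), s; split => //; [exact: SM | rewrite mulrA].
Qed.

Lemma localize_mul {Q y z} : Q 0 -> compl_mulr_closed Q ->
  localize S Q y -> localize S Q z -> localize S Q (y * z).
Proof.
move=> Q0 QM [a [s [Sa Ss Qs ->]]] [b [t [Sb St Qt ->]]].
exists (a * b), (s * t); split; [exact: SM | exact: SM | exact: QM |].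
by field; rewrite !(compl_neq0 Q0).
Qed.

Definition adjoin Q b : K -> Prop := fun z => exists m r, [/\ Q m, S r & z = m + r * b].

Lemma adjoin_ideal Q b : is_ideal S Q -> S b -> is_ideal S (adjoin Q b).
Proof.
move=> [hQ QS] Sb; split; first split.
- by exists 0, 0; split; [exact: submod0 | exact: S0 | rewrite mul0r addr0].
- move=> y z [m [r [Qm Sr ->]]] [m' [r' [Qm' Sr' ->]]].
  by exists (m + m'), (r + r'); split; [exact: submodD | exact: SD | rewrite mulrDl addrACA].
- move=> r' y Sr' [m [r [Qm Sr ->]]].
  by exists (r' * m), (r' * r); split; [exact: submodZ | exact: SM | rewrite mulrDr mulrA].
- by move=> y [m [r [Qm Sr ->]]]; apply: SD; [exact: QS | exact: SM].
Qed.

Lemma adjoin_l Q b y : Q y -> adjoin Q b y.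
Proof. by move=> Qy; exists y, 0; split => //; [exact: S0 | rewrite mul0r addr0]. Qed.

Lemma adjoin_r Q b : Q 0 -> adjoin Q b b.
Proof. by move=> Q0; exists 0, 1; split => //; [exact: S1 | rewrite mul1r add0r]. Qed.

Lemma adjoin_mul Q b c m r m' r' : is_ideal S Q -> S b -> S c -> Q (b * c) ->
  Q m -> S r -> Q m' -> S r' -> Q ((m + r * b) * (m' + r' * c)).
Proof.
move=> [hQ QS] Sb Sc Qbc Qm Sr Qm' Sr'.
have -> : (m + r * b) * (m' + r' * c) = m * (m' + r' * c) + r * (b * m') + (r * r') * (b * c)
  by ring.
apply: (submodD hQ); first apply: (submodD hQ).
- by apply: (submodZr hQ) Qm; apply: SD (QS _ Qm') _; apply: SM.
- exact/(submodZ hQ Sr)/(submodZ hQ Sb Qm').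
- exact: (submodZ hQ (SM Sr Sr') Qbc).
Qed.

Lemma vop_adjoinX B a y n : is_submod S B -> (forall b, B b -> S b) -> S a ->
  vop S (adjoin B a) y -> vop S (adjoin B (a ^+ n.+1)) (y ^+ n.+1).
Proof.
move=> hB BS Sa hy; elim: n => [|n IH]; first by rewrite !expr1.
rewrite [y ^+ n.+2]exprSr; apply: (vop_mul _ IH hy) => _ _ [m [r [Bm Sr ->]]] [m' [r' [Bm' Sr' ->]]].
exists ((m + r * a ^+ n.+1) * m' + m * (r' * a)), (r * r'); split; last by rewrite !exprS; ring.
  apply: (submodD hB); last exact: (submodZr hB) (SM Sr' Sa) Bm.
  by apply: (submodZ hB) Bm'; apply: SD (BS _ Bm) (SM Sr (SX _ Sa)).
exact: SM.
Qed.

Lemma max_t_ideal_0 M : is_max_t_ideal S M -> M 0.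
Proof. by case=> [[[[M0 _ _] _] _] _ _]. Qed.

Lemma max_t_ideal_exists Q : is_t_ideal S Q -> ~ Q 1 ->
  exists M, is_max_t_ideal S M /\ forall y, Q y -> M y.
Proof.
move=> tQ Q1.
have chain_t F : (forall X, F X -> is_t_ideal S X /\ ~ X 1) -> (exists X, F X) ->
    is_chain F -> is_t_ideal S (chain_union F) /\ ~ chain_union F 1.
  move=> FF Fne Fch; split; last by move=> [X [FX X1]]; case: (FF X FX).
  split; first by apply: chain_union_ideal => // X /FF [[]].
  move=> y; split; last exact: top_ext.
  move=> [g [hg hy]]; have [X [FX hX]] := all_in_chain_union Fne Fch hg.
  by exists X; split => //; apply: t_ideal_vop (FF X FX).1 hX hy.
have [M [[tM M1] QM maxM]] := Zorn_above (conj tQ Q1) chain_t.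
exists M; split => //; split => // Q' tQ' Q'1 MQ' y.
by split; [apply: (maxM Q') | apply: MQ'].
Qed.

Lemma max_t_ideal_adjoin M a : is_max_t_ideal S M -> S a -> ~ M a -> top S (adjoin M a) 1.
Proof.
move=> [tM M1 maxM] Sa Ma; apply: NNPP => nA.
have idA := adjoin_ideal tM.1 Sa.
have MA y : M y -> top S (adjoin M a) y by move/adjoin_l/top_ext.
have [Aa_Ma _] := maxM _ (top_t_ideal idA) nA MA a; apply/Ma/Aa_Ma.
exact/top_ext/adjoin_r/submod0/tM.1.1.
Qed.

Lemma max_t_ideal_prime M a b : is_max_t_ideal S M -> S a -> S b -> M (a * b) -> M a \/ M b.
Proof.
move=> hM Sa Sb Mab; apply: NNPP => /not_or_and [Ma Mb].
have [tM M1 _] := hM.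
have [g1 [h1 v1]] := max_t_ideal_adjoin hM Sa Ma.
have [g2 [h2 v2]] := max_t_ideal_adjoin hM Sb Mb.
(* [(M + aR)(M + bR) ⊆ M], hence [1 ∈ (M + bR)_t] lies in [M_t = M]. *)
have hg2 : all_in g2 (top S M).
  apply: all_in_mono h2 => c hc.
  exists (map (fun d => c * d) g1); split.
    apply: all_in_map h1 => d [m [r [Mm Sr ->]]]; case: hc => m' [r' [Mm' Sr' ->]].
    by rewrite mulrC; apply: adjoin_mul tM.1 Sa Sb Mab Mm Sr Mm' Sr'.
  by have := vop_scale (@span_map_mul c g1) v1; rewrite mulr1.
have [h [hh hs]] := top_span hg2.
apply/M1/(t_ideal_vop tM hh)/vop_idem; exact: vop_mono v2.
Qed.

Lemma max_t_ideal_compl_mulr_closed M : is_max_t_ideal S M -> compl_mulr_closed M.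
Proof. by move=> hM a b Sa Sb Ma Mb /(max_t_ideal_prime hM Sa Sb) []. Qed.

Lemma max_t_ideal_vop1 M g : is_max_t_ideal S M -> vop S (Defs.span S g) 1 ->
  exists2 i, (i < size g)%N & ~ M g`_i.
Proof.
move=> [tM M1 _] hv; apply: NNPP => h; apply/M1/(t_ideal_vop tM _ hv) => i hi.
by apply: NNPP => Mi; apply: h; exists i.
Qed.

(* The only use of the P$v$MD hypothesis.  Writing [z = a/b], since
   [((a, b)(a, b)^-1)_t = R] some product [al * be] with [al ∈ (a, b)] and
   [be ∈ (a, b)^-1] avoids [M]; then [be a] or [be b] avoids [M]. *)
Lemma max_t_ideal_valuation M z : PvMD S -> is_max_t_ideal S M ->
  localize S M z \/ localize S M z^-1.
Proof.
move=> hP hM; have [[[idM _] _] M1 _] := hM.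
have [_ _ _ _ /(_ z) [a [b [Sa Sb b0 ->]]]] := HS.
have [->|a0] := eqVneq a 0; first by left; rewrite mul0r; apply: localize_S M1 S0.
have hg : all_in [:: a; b] S by apply/all_in_cons; split => //; apply/all_in_cons.
have [_ /(_ S1) [g [hg1 hv]]] := hP _ hg (ex_intro _ a (conj (span_head a [:: b]) a0)) 1.
have [i hi Mi] := max_t_ideal_vop1 hM hv.
have [n [al [be [hab he]]]] := hg1 i hi.
have [j Mj] : exists j : 'I_n, ~ M (al j * be j).
  apply: NNPP => nj; apply/Mi; rewrite he; apply: (submod_sum idM) => j.
  by apply: NNPP => Mj; apply: nj; exists j.
have [abj inb] := hab j (ltn_ord j).
move: abj Mj => /span_cons [r [_ [Sr /span_cons [r' [_ [Sr' /span_nil -> ->]]] ->]]].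
rewrite addr0 => Mj.
have Sa' : S (be j * a) by apply/inb/span_head.
have Sb' : S (be j * b) by apply/inb/span_tail/span_head.
have [Ma|Ma] := classic (M (be j * a)); last first.
  have bj0 : be j != 0 by move: Ma; apply: contra_not_neq => ->; rewrite mul0r; apply: submod0 idM.
  by right; exists (be j * b), (be j * a); split => //; field; rewrite bj0 b0 a0.
have [Mb|Mb] := classic (M (be j * b)).
  case: Mj.
  have -> : (r * a + r' * b) * be j = r * (be j * a) + r' * (be j * b) by ring.
  by apply: (submodD idM); apply: (submodZ idM).
have bj0 : be j != 0 by move: Mb; apply: contra_not_neq => ->; rewrite mul0r; apply: submod0 idM.
by left; exists (be j * a), (be j * b); split => //; field; rewrite bj0 b0.
Qed.

(* [b ∈ A R_M], witnessed by a denominator outside [M]. *)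
Definition loc_mem M A b := exists w, [/\ S w, ~ M w & A (w * b)].

Lemma loc_mem_submod M A : is_max_t_ideal S M -> is_submod S A -> is_submod S (loc_mem M A).
Proof.
move=> hM hA; have [_ M1 _] := hM; split.
- by exists 1; split; [exact: S1 | | rewrite mulr0; exact: submod0].
- move=> b1 b2 [w1 [Sw1 Mw1 A1]] [w2 [Sw2 Mw2 A2]]; exists (w1 * w2); split.
  + exact: SM.
  + exact: max_t_ideal_compl_mulr_closed.
  + have -> : w1 * w2 * (b1 + b2) = w2 * (w1 * b1) + w1 * (w2 * b2) by ring.
    by apply: (submodD hA); apply: (submodZ hA).
- move=> r b Sr [w [Sw Mw Ab]]; exists w; split => //.
  by rewrite mulrCA; apply: (submodZ hA).
Qed.

(* [A_w = ∩ A R_M] over the maximal $t$-ideals [M]: the [w] with [w y ∈ A]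
   form an ideal [C] not contained in any [M], so [C_t = R] and [C] contains
   a finitely generated [J] with [J_v = R] and [J y ⊆ A]. *)
Lemma wop_local A y : is_submod S A ->
  (forall M, is_max_t_ideal S M -> loc_mem M A y) -> wop S A y.
Proof.
move=> hA hloc; pose C w := S w /\ A (w * y).
have idC : is_ideal S C.
  split; last by move=> w [].
  split; first by split; [exact: S0 | rewrite mul0r; exact: submod0].
    move=> w1 w2 [Sw1 A1] [Sw2 A2]; split; first exact: SD.
    by rewrite mulrDl; apply: (submodD hA).
  move=> r w Sr [Sw Aw]; split; first exact: SM.
  by rewrite -mulrA; apply: (submodZ hA).
have [[g [hg hv]]|nC] := classic (top S C 1); last first.
  have [M [hM CM]] := max_t_ideal_exists (top_t_ideal idC) nC.
  have [w [Sw Mw Aw]] := hloc M hM.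
  by case: Mw; apply/CM/top_ext.
have gS : all_in g S by apply: all_in_mono hg => w [].
exists g; split => //; split.
  move=> z; split; first by apply/vop_subS/span_subS.
  by move=> Sz; rewrite -[z]mulr1; apply: (submodZ (vop_submod _)).
by move=> b /(span_min idC.1 hg) [_]; rewrite mulrC.
Qed.

Lemma wop_sub_local A B y : is_submod S A ->
  (forall M, is_max_t_ideal S M -> forall b, B b -> loc_mem M A b) ->
  wop S B y -> wop S A y.
Proof.
move=> hA hloc [g [hg [hv hc]]]; apply: wop_local => // M hM.
have [i hi Mi] := max_t_ideal_vop1 hM ((hv 1).2 S1).
have [w [Sw Mw Aw]] := hloc M hM _ (hc _ (span_nth hi)).
exists (w * g`_i); split; first by apply: SM => //; apply: hg.
  by apply: max_t_ideal_compl_mulr_closed => //; apply: hg.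
by rewrite mulrAC -mulrA.
Qed.

Lemma wop_ext A y : is_submod S A -> A y -> wop S A y.
Proof.
move=> hA Ay; exists [:: 1]; split; first by apply/all_in_cons; split => //; exact: S1.
split; first exact: vop_span1.
by move=> b /span_cons [r [z [Sr /span_nil -> ->]]]; rewrite mulr1 addr0; apply: (submodZr hA).
Qed.

Lemma wop_mono A B y : (forall a, A a -> B a) -> wop S A y -> wop S B y.
Proof. by move=> AB [g [hg [hv hc]]]; exists g; split => //; split => // b /hc /AB. Qed.

Section MinimalPrime.
Variables (x : K) (P : K -> Prop).
Hypotheses (hxS : S x) (hx0 : x != 0) (HP : minimal_prime_over S P x).

Lemma minimal_prime_ideal : is_ideal S P. Proof. by case: HP => [[]]. Qed.
Lemma minimal_prime_1 : ~ P 1. Proof. by case: HP => [[]]. Qed.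
Lemma minimal_prime_x : P x. Proof. by case: HP. Qed.
Lemma minimal_prime_0 : P 0. Proof. exact: submod0 minimal_prime_ideal.1. Qed.
Lemma minimal_prime_sub y : P y -> S y. Proof. exact: minimal_prime_ideal.2. Qed.
Lemma minimal_prime_prime a b : S a -> S b -> P (a * b) -> P a \/ P b.
Proof. by case: HP => [[_ _ hP] _ _]; apply: hP. Qed.
Lemma minimal_prime_compl_mulr_closed : compl_mulr_closed P.
Proof. by move=> a b Sa Sb Pa Pb /(minimal_prime_prime Sa Sb) []. Qed.

Lemma minimal_prime_complX s n : S s -> ~ P s -> ~ P (s ^+ n).
Proof.
move=> Ss Ps; elim: n => [|n IH]; first by rewrite expr0; exact: minimal_prime_1.
by rewrite exprS; apply: minimal_prime_compl_mulr_closed => //; apply: SX.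
Qed.

Lemma principal_minimal_prime y : principal S x y -> P y.
Proof. by move=> [r [Sr ->]]; apply: submodZr minimal_prime_ideal.1 Sr minimal_prime_x. Qed.

(* [P R_P] is the radical of [x R_P]: an ideal containing [x] and maximal
   among those avoiding the multiplicative set [{s a^n : s ∉ P}] is a prime
   inside [P], hence equal to [P] by minimality, yet it misses [a]. *)
Lemma minimal_prime_radical a : P a ->
  exists s n, [/\ S s, ~ P s & principal S x (s * a ^+ n)].
Proof.
move=> Pa; apply: NNPP => noX.
pose Fam A := is_ideal S A /\ forall s n, S s -> ~ P s -> ~ A (s * a ^+ n).
have Fam_x : Fam (principal S x).
  split; first by split; [exact: principal_submod | move=> y; apply: principal_subS].
  by move=> s n Ss Ps xs; apply: noX; exists s, n.
have chain_Fam F : (forall X, F X -> Fam X) -> (exists X, F X) -> is_chain F ->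
    Fam (chain_union F).
  move=> FF Fne Fch; split; first by apply: chain_union_ideal => // X /FF [].
  by move=> s n Ss Ps [X [FX Xs]]; apply: (FF X FX).2 Ss Ps Xs.
have [Q [[idQ avQ] xQ maxQ]] := Zorn_above Fam_x chain_Fam.
have QP y : Q y -> P y.
  move=> Qy; apply: NNPP => Py; apply: (avQ y 0%N (ideal_sub idQ Qy) Py).
  by rewrite expr0 mulr1.
have adjoin_meets b : S b -> ~ Q b ->
    exists s n, [/\ S s, ~ P s & adjoin Q b (s * a ^+ n)].
  move=> Sb Qb; apply: NNPP => h; apply/Qb/(maxQ (adjoin Q b)); last first.
  - exact/adjoin_r/(submod0 idQ.1).
  - by move=> y; apply: adjoin_l.
  split; first exact: adjoin_ideal.
  by move=> s n Ss Ps hs; apply: h; exists s, n.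
have primeQ : is_prime S Q.
  split => //; first by move=> Q1; apply: (avQ 1 0%N S1 minimal_prime_1); rewrite mulr1.
  move=> b c Sb Sc Qbc; apply: NNPP => /not_or_and [Qb Qc].
  have [s1 [n1 [Ss1 Ps1 [m1 [r1 [Qm1 Sr1 e1]]]]]] := adjoin_meets b Sb Qb.
  have [s2 [n2 [Ss2 Ps2 [m2 [r2 [Qm2 Sr2 e2]]]]]] := adjoin_meets c Sc Qc.
  apply: (avQ (s1 * s2) (n1 + n2)%N (SM Ss1 Ss2) (minimal_prime_compl_mulr_closed Ss1 Ss2 Ps1 Ps2)).
  have -> : s1 * s2 * a ^+ (n1 + n2) = (s1 * a ^+ n1) * (s2 * a ^+ n2).
    by rewrite exprD; ring.
  by rewrite e1 e2; apply: adjoin_mul.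
have xQ' : Q x by apply: xQ; exists 1; split; [exact: S1 | rewrite mulr1].
have [_ _ minP] := HP; have [_ /(_ Pa) Qa] := minP Q primeQ xQ' QP a.
by apply: (avQ 1 1%N S1 minimal_prime_1); rewrite mul1r expr1.
Qed.

(* [(a_1, ..., a_k, x)_v] lies in the radical of [x R_P ∩ R] when all [a_i ∈ P]:
   adjoin the [a_i] one at a time, clearing each with [minimal_prime_radical]. *)
Lemma minimal_prime_vop g y : all_in g P ->
  vop S (isum (Defs.span S g) (principal S x)) y ->
  exists s n, [/\ S s, ~ P s & principal S x (s * y ^+ n)].
Proof.
elim: g y => [|a g IH] y hg hy.
  exists 1, 1%N; split; [exact: S1 | exact: minimal_prime_1 | rewrite mul1r expr1].
  by apply: vop_principal hx0 _; apply: vop_mono hy => z [_ [b [/span_nil -> xb ->]]]; rewrite add0r.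
move/all_in_cons: hg => [Pa hg].
have Sa := minimal_prime_sub Pa.
pose B := isum (Defs.span S g) (principal S x).
have hB : is_submod S B by apply: isum_submod; [exact: span_submod | exact: principal_submod].
have BS z : B z -> S z.
  move=> [c [d [cg dx ->]]]; apply: SD (principal_subS hxS dx).
  by apply: span_subS cg; apply: all_in_mono hg; apply: minimal_prime_sub.
have hya : vop S (adjoin B a) y.
  apply: vop_mono hy => _ [_ [d [/span_cons [r [c [Sr cg ->]]] dx ->]]].
  by exists (c + d), r; split; [exists c, d | | rewrite -addrA addrC].
have [s [n [Ss Ps xs]]] := minimal_prime_radical Pa.
have xs1 : principal S x (s * a ^+ n.+1).
  by rewrite exprS mulrCA; apply: (submodZ (principal_submod x)) xs.
have hvB : vop S B (s * y ^+ n.+1).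
  apply: (vop_scale _ (vop_adjoinX hB BS Sa hya)) => _ [m [r [Bm Sr ->]]].
  rewrite mulrDr mulrCA; apply: (submodD hB); first exact: (submodZ hB) Ss Bm.
  exists 0, (r * (s * a ^+ n.+1)); split; [exact: submod0 (span_submod _) | | by rewrite add0r].
  exact: (submodZ (principal_submod x)) Sr xs1.
have [s' [N [Ss' Ps' xs']]] := IH _ hg hvB.
exists (s' * s ^+ N), (n.+1 * N)%N; split.
- by apply: SM => //; apply: SX.
- by apply: minimal_prime_compl_mulr_closed => //; [apply: SX | apply: minimal_prime_complX].
- by move: xs'; rewrite exprMn exprM mulrA.
Qed.

Lemma minimal_prime_t_ideal : is_t_ideal S P.
Proof.
split; first exact: minimal_prime_ideal.
move=> y; split; last exact: top_ext.
move=> [g [hg hv]].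
have Sy : S y by apply: vop_subS hv; apply: span_subS; apply: all_in_mono hg; apply: minimal_prime_sub.
have hv' : vop S (isum (Defs.span S g) (principal S x)) y.
  apply: vop_mono hv => z hz; exists z, 0; split => //; last by rewrite addr0.
  exact: submod0 (principal_submod x).
have [s [n [Ss Ps /principal_minimal_prime]]] := minimal_prime_vop hg hv'.
case/minimal_prime_prime => [||/Ps []|Pyn]; [exact: Ss | exact: SX |].
by apply: NNPP => Py; apply: minimal_prime_complX Sy Py Pyn.
Qed.

Definition xloc : K -> Prop := fun y => S y /\ exists r, localize S P r /\ y = x * r.

Lemma xloc_submod : is_submod S xloc.
Proof.
have hPloc := localize_submod minimal_prime_0 minimal_prime_1 minimal_prime_compl_mulr_closed.
split.
- by split; [exact: S0 | exists 0; split; [exact: submod0 hPloc | rewrite mulr0]].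
- move=> y z [Sy [r [lr ey]]] [Sz [t [lt ez]]]; split; first exact: SD Sy Sz.
  by exists (r + t); split; [exact: submodD hPloc lr lt | rewrite ey ez mulrDr].
- move=> r y Sr [Sy [t [lt ey]]]; split; first exact: SM Sr Sy.
  exists (r * t); split; last by rewrite ey mulrCA.
  apply: localize_mul minimal_prime_0 minimal_prime_compl_mulr_closed _ lt.
  exact: localize_S minimal_prime_1 Sr.
Qed.

Lemma xloc_sub y : xloc y -> S y. Proof. by case. Qed.

Lemma xloc_x : xloc x.
Proof. by split => //; exists 1; split; [exact: localize_S minimal_prime_1 S1 | rewrite mulr1]. Qed.

Lemma xloc_intro y a s : S y -> S a -> S s -> ~ P s -> s * y = x * a -> xloc y.
Proof.
move=> Sy Sa Ss Ps e; split => //; exists (a / s); split; first by exists a, s.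
have s0 := compl_neq0 minimal_prime_0 Ps.
by apply: (mulfI s0); rewrite e; field.
Qed.

Lemma xloc_elim y : xloc y -> exists a s, [/\ S a, S s, ~ P s & s * y = x * a].
Proof.
move=> [Sy [r [[a [s [Sa Ss Ps ->]]] ->]]]; exists a, s; split => //.
by field; apply: compl_neq0 minimal_prime_0 Ps.
Qed.

Lemma xloc_minimal_prime y : xloc y -> P y.
Proof.
move=> hy; have [a [s [Sa Ss Ps e]]] := xloc_elim hy.
have : P (s * y) by rewrite e; apply: submodZr minimal_prime_ideal.1 Sa minimal_prime_x.
by case/(minimal_prime_prime Ss (xloc_sub hy)).
Qed.

(* Some generator of a [J] with [J_v = R] lies outside the $t$-ideal [P],
   and it serves as the extra denominator. *)
Lemma xloc_w_closed : seteq (wop S xloc) xloc.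
Proof.
move=> y; split; last exact: wop_ext xloc_submod.
move=> [g [hg [hv hc]]].
have v1 := (hv 1).2 S1.
have Sy : S y.
  by rewrite -[y]mul1r; apply: v1 => b /hc; rewrite mulrC; apply: xloc_sub.
have [i hi Pi] : exists2 i, (i < size g)%N & ~ P g`_i.
  apply: NNPP => h; apply/minimal_prime_1/(t_ideal_vop minimal_prime_t_ideal _ v1) => i hi.
  by apply: NNPP => Pi; apply: h; exists i.
have Sgi : S g`_i by apply: hg.
have [a [s [Sa Ss Ps e]]] := xloc_elim (hc _ (span_nth hi)).
apply: (xloc_intro Sy Sa (SM Ss Sgi) (minimal_prime_compl_mulr_closed Ss Sgi Ps Pi)).
by rewrite -e mulrAC mulrA.
Qed.

Lemma iprod_S_xloc y : iprod S xloc y -> xloc y.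
Proof. by apply: iprod_min xloc_submod _ => a b Sa Ib; apply: submodZ xloc_submod Sa Ib. Qed.

Lemma xloc_iprod_S y : xloc y -> iprod S xloc y.
Proof. by move=> Iy; rewrite -[y]mul1r; apply: iprod_1 S1 Iy. Qed.

Lemma xloc2_submod : is_submod S (ipow S xloc 2).
Proof. exact: iprod_submod xloc_submod. Qed.

Lemma xloc2_min C y : is_submod S C -> (forall u v, xloc u -> xloc v -> C (u * v)) ->
  ipow S xloc 2 y -> C y.
Proof. by move=> hC hp; apply: iprod_min hC _ => a b /iprod_S_xloc Ia Ib; apply: hp. Qed.

Lemma xloc2_mul u v : xloc u -> xloc v -> ipow S xloc 2 (u * v).
Proof. by move=> Iu Iv; apply: iprod_1 (xloc_iprod_S Iu) Iv. Qed.

Lemma xloc2_sub_xloc y : ipow S xloc 2 y -> xloc y.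
Proof.
by apply: xloc2_min xloc_submod _ => u v Iu Iv; apply: submodZ xloc_submod (xloc_sub Iu) Iv.
Qed.

Lemma xloc2_mulr z a : ipow S xloc 2 z -> xloc a -> ipow S xloc 2 (z * a).
Proof.
move=> hz Ia; pose C z := ipow S xloc 2 (z * a).
have hC : is_submod S C.
  split; first by rewrite /C mul0r; exact: submod0 xloc2_submod.
    by move=> y1 y2 h1 h2; rewrite /C mulrDl; apply: submodD xloc2_submod h1 h2.
  by move=> r y Sr hy; rewrite /C -mulrA; apply: submodZ xloc2_submod Sr hy.
apply: xloc2_min hC _ hz => u v Iu Iv; rewrite /C -mulrA; apply: xloc2_mul Iu _.
exact: submodZr xloc_submod (xloc_sub Ia) Iv.
Qed.

Definition xloc_red : K -> Prop := isum (principal S x) (ipow S xloc 2).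

Lemma xloc_red_ideal : is_ideal S xloc_red.
Proof.
split; first exact: isum_submod (principal_submod x) xloc2_submod.
move=> _ [a [b [xa /xloc2_sub_xloc Ib ->]]].
exact: SD (principal_subS hxS xa) (xloc_sub Ib).
Qed.

Lemma xloc_red_sub y : xloc_red y -> xloc y.
Proof.
move=> [_ [b [[r [Sr ->]] /xloc2_sub_xloc Ib ->]]].
exact: submodD xloc_submod (submodZr xloc_submod Sr xloc_x) Ib.
Qed.

Lemma xloc_red_x y : principal S x y -> xloc_red y.
Proof. by move=> xy; exists y, 0; split => //; [exact: submod0 xloc2_submod | rewrite addr0]. Qed.

Lemma xloc2_xloc_red y : ipow S xloc 2 y -> xloc_red y.
Proof.
by move=> hy; exists 0, y; split => //; [exact: submod0 (principal_submod x) | rewrite add0r].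
Qed.

Lemma xloc_red_xloc_sub y : iprod xloc_red (ipow S xloc 1) y -> ipow S xloc 2 y.
Proof.
apply: iprod_min xloc2_submod _ => _ a [c [z [[r [Sr ->]] Iz ->]]] /iprod_S_xloc Ia.
rewrite mulrDl; apply: submodD xloc2_submod _ (xloc2_mulr Iz Ia).
exact/xloc2_mul/Ia/(submodZr xloc_submod Sr xloc_x).
Qed.

Hypothesis hPv : PvMD S.

Section MaximalTAboveXloc.
Variable M : K -> Prop.
Hypotheses (hM : is_max_t_ideal S M) (IM : forall z, xloc z -> M z).

(* [R_M] is a valuation ring, and [(x/s)^-1 ∈ R_M] would put some [d ∉ M] in [I]. *)
Lemma xloc_max_t_div s : S s -> ~ P s -> localize S M (x / s).
Proof.
move=> Ss Ps; have [//|[c [d [Sc Sd Md e]]]] := max_t_ideal_valuation (x / s) hPv hM.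
have s0 := compl_neq0 minimal_prime_0 Ps.
have d0 := compl_neq0 (max_t_ideal_0 hM) Md.
case: Md; apply/IM/(xloc_intro Sd Sc Ss Ps).
have : (x / s)^-1 * d = c / d * d by rewrite e.
by rewrite mulfVK // invf_div => <-; field.
Qed.

Lemma xloc_mul_div_x u v : xloc u -> xloc v -> localize S M (u * v / x).
Proof.
move=> Iu Iv.
have [a [s [Sa Ss Ps eu]]] := xloc_elim Iu.
have [b [t [Sb St Pt ev]]] := xloc_elim Iv.
have s0 := compl_neq0 minimal_prime_0 Ps; have t0 := compl_neq0 minimal_prime_0 Pt.
have -> : u * v / x = x / (s * t) * (a * b).
  have -> : u = x * a / s by rewrite -eu; field.
  have -> : v = x * b / t by rewrite -ev; field.
  by field; rewrite s0 t0 hx0.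
apply: localize_mul (max_t_ideal_0 hM) (max_t_ideal_compl_mulr_closed hM) _ _.
  exact: xloc_max_t_div (SM Ss St) (minimal_prime_compl_mulr_closed Ss St Ps Pt).
by apply: localize_S (SM Sa Sb); case: hM.
Qed.

Lemma xloc2_div_x z : ipow S xloc 2 z -> localize S M (z / x).
Proof.
have [_ M1 _] := hM.
have hMloc := localize_submod (max_t_ideal_0 hM) M1 (max_t_ideal_compl_mulr_closed hM).
pose C z := localize S M (z / x).
have hC : is_submod S C.
  split; first by rewrite /C mul0r; exact: submod0 hMloc.
    by move=> y1 y2 h1 h2; rewrite /C mulrDl; apply: submodD hMloc h1 h2.
  by move=> r y Sr h; rewrite /C -mulrA; apply: submodZ hMloc Sr h.
exact: xloc2_min hC xloc_mul_div_x.
Qed.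

End MaximalTAboveXloc.

Lemma xloc2_loc_mem M u v : is_max_t_ideal S M -> xloc u -> xloc v ->
  loc_mem M (iprod xloc_red (ipow S xloc 1)) (u * v).
Proof.
move=> hM Iu Iv.
have [[z [Iz Mz]]|nIM] := classic (exists z, xloc z /\ ~ M z).
  exists z; split => //; first exact: xloc_sub.
  by rewrite mulrC; apply: iprod_1 (xloc_iprod_S Iz); apply/xloc2_xloc_red/xloc2_mul.
have IM z : xloc z -> M z by move=> Iz; apply: NNPP => Mz; apply: nIM; exists z.
have [e [d [Se Sd Md ee]]] := xloc_mul_div_x hM IM Iu Iv.
have d0 := compl_neq0 (max_t_ideal_0 hM) Md.
have de : d * (u * v) = x * e.
  by rewrite -[u * v](divfK hx0) ee; field.
have [a [s [Sa Ss Ps eu]]] := xloc_elim Iu.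
have [b [t [Sb St Pt ev]]] := xloc_elim Iv.
have Ie : xloc e.
  apply: xloc_intro Se (SM Sd (SM Sa Sb)) (SM Ss St) (minimal_prime_compl_mulr_closed Ss St Ps Pt) _.
  apply: (mulfI hx0); rewrite mulrCA -de.
  have -> : s * t * (d * (u * v)) = d * ((s * u) * (t * v)) by ring.
  by rewrite eu ev; ring.
exists d; split => //; rewrite de; apply: iprod_1 _ (xloc_iprod_S Ie).
by apply: xloc_red_x; exists 1; split; [exact: S1 | rewrite mulr1].
Qed.

Lemma xloc_w_reduction : w_reduction S xloc_red xloc.
Proof.
split; first exact: xloc_red_ideal.
split; first exact: xloc_red_sub.
exists 1%N => y; split; first exact/wop_mono/xloc_red_xloc_sub.
apply: wop_sub_local (iprod_submod _ (iprod_submod _ xloc_submod)) _ => M hM b.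
apply: xloc2_min (loc_mem_submod hM (iprod_submod _ (iprod_submod _ xloc_submod))) _.
by move=> u v; apply: xloc2_loc_mem.
Qed.

(* If [y ∈ Q' \ P] for a proper $t$-ideal [Q' ⊇ P], take a maximal $t$-ideal
   [M ⊇ Q'] and write [x/y = c/f] with [f ∉ M]; then [c ∈ I = J_w], so
   [c h ∈ xR + I^2] for some [h ∉ M], which forces [f h / y ∈ R_M] and thus
   [f h ∈ M], a contradiction. *)
Lemma xloc_w_basic_max_t : w_basic S xloc -> is_max_t_ideal S P.
Proof.
move=> hb; split; [exact: minimal_prime_t_ideal | exact: minimal_prime_1 |].
move=> Q' tQ' Q'1 PQ' y; split; last exact: PQ'.
move=> Q'y; apply: NNPP => Py.
have Sy := ideal_sub tQ'.1 Q'y.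
have [M [hM Q'M]] := max_t_ideal_exists tQ' Q'1.
have IM z : xloc z -> M z by move=> /xloc_minimal_prime /PQ' /Q'M.
have [[[idM _] _] M1 _] := hM.
have [c [f [Sc Sf Mf e]]] := xloc_max_t_div hM IM Sy Py.
have f0 := compl_neq0 (max_t_ideal_0 hM) Mf.
have y0 := compl_neq0 minimal_prime_0 Py.
have ce : c = x / y * f by rewrite e; field.
have Ic : xloc c by apply: (xloc_intro Sc Sf Sy Py); rewrite ce; field.
have [g [hg [hv hcol]]] : wop S xloc_red c := (hb _ xloc_w_reduction c).2 ((xloc_w_closed c).2 Ic).
have [i hi Mi] := max_t_ideal_vop1 hM ((hv 1).2 S1).
have Sh : S g`_i by apply: hg.
have [_ [z [[r [Sr ->]] Iz ech]]] := hcol _ (span_nth hi).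
have hMloc := localize_submod (max_t_ideal_0 hM) M1 (max_t_ideal_compl_mulr_closed hM).
have [c' [d' [Sc' Sd' Md' e']]] : localize S M (f * g`_i / y).
  have -> : f * g`_i / y = r + z / x.
    have -> : r + z / x = c * g`_i / x by rewrite ech; field.
    by rewrite ce; field; rewrite hx0 y0.
  exact: submodD hMloc (localize_S M1 Sr) (xloc2_div_x hM IM Iz).
have d0 := compl_neq0 (max_t_ideal_0 hM) Md'.
have : M (f * g`_i * d').
  have -> : f * g`_i * d' = y * c' by rewrite -[f * g`_i](divfK y0) e'; field.
  exact: submodZr idM Sc' (Q'M _ Q'y).
case/(max_t_ideal_prime hM (SM Sf Sh) Sd') => //.
by case/(max_t_ideal_prime hM Sf Sh).
Qed.

End MinimalPrime.

End Domain.

Unset Implicit Arguments.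

Theorem lemma2p3 (K : fieldType) (S : K -> Prop)
    (HS : is_domain_with_qf S) (Hpvmd : PvMD S)
    (x : K) (hxS : S x) (hx0 : x != 0)
    (P : K -> Prop) (HP : minimal_prime_over S P x) :
  let I : K -> Prop := fun y => S y /\ exists r, localize S P r /\ y = x * r in
  [/\ seteq (wop S I) I,
      w_reduction S (isum (principal S x) (ipow S I 2)) I &
      (w_basic S I -> is_max_t_ideal S P)].
Proof.
move=> I; split.
- exact: (xloc_w_closed HS hxS hx0 HP).
- exact: (xloc_w_reduction HS hxS hx0 HP Hpvmd).
- exact: (xloc_w_basic_max_t HS hxS hx0 HP Hpvmd).
Qed.
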